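(* Let $P$ be a finite abelian $p$-group. Then $\mathrm{Perf}(\mathcal{O}P)\cong \mathrm{Aut}(\mathcal{O}P)\times C_2$.
   Context: $(K,\mathcal{O},k)$ is a $p$-modular system with $k$ algebraically closed of characteristic $p$. For a block $B$, $\mathrm{Perf}(B)$ is the group (under composition) of perfect self-isometries of $B$ in the sense of Broué: isometries $I:\mathbb{Z}\mathrm{Irr}(B)\to\mathbb{Z}\mathrm{Irr}(B)$ whose associated generalized character $\mu(g,h)=\sum_{\chi}I(\chi)(g)\chi(h^{-1})$ is perfect. $\mathrm{Aut}(\mathcal{O}P)$ is the group of $\mathcal{O}$-algebra automorphisms of $\mathcal{O}P$. *)

From HB Require Import structures.
From mathcomp Require Import all_boot all_order all_algebra all_fingroup all_solvable all_field all_character.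
Set Implicit Arguments. Unset Strict Implicit. Unset Printing Implicit Defensive.
Import Order.TTheory GRing.Theory Num.Theory.
Local Open Scope ring_scope.

Definition dvdr (R : comNzRingType) (a b : R) : Prop := exists c, b = c * a.

(* O is a complete discrete valuation ring of characteristic 0, with
   uniformizer pi, whose residue field k = O/(pi) is algebraically closed of
   characteristic p.  K = Frac(O). *)
Definition pmodular_ring (O : idomainType) (p : nat) : Prop :=
  (forall n : nat, n%:R = 0 :> O -> n = 0%N) /\
      exists pi : O,
        [/\ pi != 0 /\ pi \isn't a GRing.unit,
            forall x : O, x != 0 -> exists n u, u \is a GRing.unit /\ x = u * pi ^+ n,
            forall x : nat -> O, (forall n, dvdr (pi ^+ n) (x n.+1 - x n)) ->
               exists l, forall n, dvdr (pi ^+ n) (l - x n),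
            (* residue field has characteristic p *)
            dvdr pi (p%:R) &
            (* residue field is algebraically closed *)
            forall q : {poly O}, q \is monic -> (1 < size q)%N ->
               exists a, dvdr pi q.[a]].

(* K (equivalently O) contains a primitive exponent(P)-th root of unity,
   i.e. K is a splitting field for the abelian group P. *)
Definition large_enough (O : idomainType) (gT : finGroupType) : Prop :=
  exists z : O, (exponent [set: gT]).-primitive_root z.

Notation galg O gT := {ffun gT -> O} (only parsing).

Definition galg_mul (O : idomainType) (gT : finGroupType) (a b : galg O gT)
  : galg O gT := [ffun x => \sum_(y : gT) a y * b (y^-1 * x)%g].

Definition galg_one (O : idomainType) (gT : finGroupType) : galg O gT :=
  [ffun x => (x == 1%g)%:R].

Definition is_alg_aut (O : idomainType) (gT : finGroupType)
    (f : galg O gT -> galg O gT) : Prop :=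
  [/\ forall (c : O) (a b : galg O gT), f [ffun x => c * a x + b x] = [ffun x => c * f a x + f b x],
      forall a b, f (galg_mul a b) = galg_mul (f a) (f b),
      f (galg_one O gT) = galg_one O gT &
      bijective f].

(* An element of O ∩ Q(zeta) viewed in algC: p-integral algebraic number. *)
Definition p_integral (p : nat) (x : algC) : Prop :=
  exists m : nat, coprime m p /\ m%:R * x \in Aint.

Section Iso.
Variable gT : finGroupType.
Local Notation G := [set: gT]%G.

Definition is_isometry (I : {ffun Iirr G -> 'CF(G)}) : Prop :=
  (forall i, I i \in ('Z[irr G])%g) /\
  (forall i j, '[I i, I j] = (i == j)%:R).

Definition iso_ext (I : {ffun Iirr G -> 'CF(G)}) (psi : 'CF(G)) : 'CF(G) :=
  \sum_i '[psi, 'chi_i] *: I i.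

Definition iso_comp (I J : {ffun Iirr G -> 'CF(G)}) : {ffun Iirr G -> 'CF(G)} :=
  [ffun i => iso_ext I (J i)].

Definition iso_mu (I : {ffun Iirr G -> 'CF(G)}) (g h : gT) : algC :=
  \sum_i (I i) g * 'chi_i (h^-1)%g.

Definition is_perfect (p : nat) (I : {ffun Iirr G -> 'CF(G)}) : Prop :=
  forall g h : gT,
   (iso_mu I g h != 0 -> ((p^'.-elt g)%g = (p^'.-elt h)%g)) /\
   p_integral p (iso_mu I g h / #|('C[g])%g|%:R) /\
   p_integral p (iso_mu I g h / #|('C[h])%g|%:R).

Definition Perf (p : nat) (I : {ffun Iirr G -> 'CF(G)}) : Prop :=
  is_isometry I /\ is_perfect p I.

End Iso.

From HB Require Import structures.
From mathcomp Require Import all_boot all_order all_algebra all_fingroup all_solvable all_field all_character.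
From mathcomp Require Import ring.
Set Implicit Arguments. Unset Strict Implicit. Unset Printing Implicit Defensive.
Import Order.TTheory GRing.Theory Num.Theory.
Local Open Scope ring_scope.

(* All irreducible characters chi_i of the abelian p-group P are linear, with values in
   the e-th roots of unity, e = exponent P; fixing primitive e-th roots w in C and z in O
   gives O-valued copies ochi_i, and the evaluations OP -> O at the ochi_i identify OP
   with a subring of O^Irr(P) (Fourier inversion, |P| being nonzero in O).

   An O-algebra automorphism f of OP permutes these evaluations, hence Irr(P); the signed
   permutations of Irr(P) obtained in this way are perfect, and conversely a perfect
   isometry is a signed permutation chi_i |-> eps chi_(s i) whose sign eps is constant (the
   signed sum of the chi_i vanishes off 1 by the separation condition).  Such an s comes
   from an automorphism exactly when all the sums (1/|P|) sum_i ochi_(s i)(g) ochi_i(h)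
   lie in O, the inverse Fourier transform then defining f.

   It remains to compare this with the p-integrality of (1/|P|) sum_i chi_(s i)(g) chi_i(h)
   in C.  Both sums are F(zeta) / p^r for one integer polynomial F, evaluated at zeta = z
   resp. zeta = w, and in both rings p^r | F(zeta) iff (1 - zeta)^(phi(e) r) | F(zeta):
   p and (1 - zeta)^phi(e) are associates, and 1 - zeta | G(zeta) forces p | G(1). *)

Definition zeval (R : comNzRingType) (x : R) : {rmorphism {poly int} -> R} :=
  horner_morph (fun a : int => mulrC x a%:~R).

Lemma zevalX (R : comNzRingType) (x : R) : zeval x 'X = x.
Proof. exact: horner_morphX. Qed.

Lemma zevalC (R : comNzRingType) (x : R) c : zeval x c%:P = c%:~R.
Proof. exact: horner_morphC. Qed.

Lemma zevalXn (R : comNzRingType) (x : R) n : zeval x 'X^n = x ^+ n.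
Proof. by rewrite rmorphXn zevalX. Qed.

Lemma rmorph_zeval (R S : comNzRingType) (f : {rmorphism R -> S}) (x : R) P :
  f (zeval x P) = zeval (f x) P.
Proof.
rewrite /zeval /= /horner_morph -horner_map /= -map_poly_comp.
by congr (_.[_]); apply: eq_map_poly => c /=; rewrite rmorph_int.
Qed.

Lemma zeval_Aint (w : algC) P : w \in Aint -> zeval w P \in Aint.
Proof.
move=> wA; rewrite /zeval /= /horner_morph rpred_horner //.
by apply/polyOverP => i; rewrite coef_map rpred_int.
Qed.

Lemma prim_root_Aint n (w : algC) : n.-primitive_root w -> w \in Aint.
Proof.
move=> w_prim; apply: (Aint_unity_root (prim_order_gt0 w_prim)).
by rewrite unity_rootE prim_expr_order.
Qed.

Lemma poly_split_at1 (Q : {poly int}) : exists T, Q = Q.[1]%:P + T * ('X - 1).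
Proof.
have /factor_theorem[T QT] : root (Q - Q.[1]%:P) 1 by rewrite rootE !hornerE subrr.
by exists T; rewrite -polyC1 -QT addrC subrK.
Qed.

Lemma expf_cancel_lt (R : idomainType) (a u v : R) j n : a != 0 -> (j < n)%N ->
  a ^+ j * u = a ^+ n * v -> u = a * (a ^+ (n - j.+1) * v).
Proof.
move=> a0 ltjn E; apply: (mulfI (expf_neq0 j a0)).
by rewrite E !mulrA -exprSr -exprD subnKC.
Qed.

Section PrimePowerRootsOfUnity.
Variables (p k : nat).
Hypothesis p_pr : prime p.
Local Notation e := (p ^ k.+1)%N.
Local Notation d := (totient (p ^ k.+1)).

Definition prime_residues := [seq i <- iota 0 e | coprime e i].

(* For a primitive e-th root z, p = prod_(i in prime_residues) (1 - z^i), where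
   1 - z^i = (1 - z) (1 + z + ... + z^(i-1)) and 1 - z = 1 - (z^i)^(i^(d-1)). *)
Definition p_over_pi : {poly int} := \prod_(i <- prime_residues) \sum_(l < i) 'X^l.
Definition pi_over_p : {poly int} :=
  \prod_(i <- prime_residues) \sum_(l < (i ^ d.-1)%N) 'X^(i * l).

Lemma prime_pow_gt1 : (1 < e)%N.
Proof. by rewrite (ltn_exp2l 0) ?prime_gt1. Qed.

Lemma totient_prime_pow_gt0 : (0 < d)%N.
Proof. by rewrite totient_gt0 expn_gt0 prime_gt0. Qed.

Lemma size_prime_residues : size prime_residues = d.
Proof.
rewrite size_filter totient_count_coprime -sum1_count big_mkcond /index_iota subn0.
by apply: eq_bigr => i _; case: coprime.
Qed.

Lemma non_prime_residues :
  [seq i <- iota 0 e | ~~ coprime e i] = [seq (p * j)%N | j <- iota 0 (p ^ k)].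
Proof.
have p_gt0 := prime_gt0 p_pr.
apply: (irr_sorted_eq (leT := ltn)); [exact: ltn_trans | exact: ltnn | | |].
- by apply: sorted_filter; [exact: ltn_trans | exact: iota_ltn_sorted].
- rewrite sorted_map; apply: sub_sorted (iota_ltn_sorted 0 _) => a b.
  by rewrite /= ltn_pmul2l.
move=> i; rewrite mem_filter mem_iota add0n coprime_sym coprime_pexpr //.
rewrite coprime_sym prime_coprime // negbK /= expnS.
apply/andP/mapP => [[/dvdnP[j ->] lt_jp] | [j]].
  by exists j; rewrite ?mem_iota ?add0n 1?mulnC // -(ltn_pmul2l p_gt0) mulnC.
by rewrite mem_iota => /andP[_ ltj] ->; rewrite dvdn_mulr ?ltn_pmul2l.
Qed.

Section Field.
Variables (F : fieldType) (z : F).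
Hypothesis z_prim : e.-primitive_root z.

Lemma prod_XsubC_prime_residues :
  \prod_(i <- prime_residues) ('X - (z ^+ i)%:P) = \sum_(l < p) ('X^(p ^ k)) ^+ l.
Proof.
have zp_prim : (p ^ k).-primitive_root (z ^+ p).
  have pk_dvd_e : (p ^ k %| e)%N by rewrite expnS dvdn_mull.
  by have := dvdn_prim_root z_prim pk_dvd_e; rewrite expnS mulnK ?expn_gt0 ?prime_gt0.
have Xpk_neq0 : 'X^(p ^ k) - 1 != 0 :> {poly F}.
  by rewrite -size_poly_eq0 size_XnsubC ?expn_gt0 ?prime_gt0.
apply: (mulfI Xpk_neq0); rewrite -subrX1 -exprM mulnC -expnS -(factor_Xn_sub_1 z_prim).
rewrite /index_iota subn0 [RHS](bigID (coprime e)) /= /prime_residues big_filter.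
rewrite -(big_filter _ (fun i => ~~ coprime e i)) non_prime_residues big_map mulrC.
congr (_ * _); rewrite -(factor_Xn_sub_1 zp_prim) /index_iota subn0.
by apply: eq_bigr => j _; rewrite exprM.
Qed.

Lemma prod_one_sub_prime_residues : p%:R = \prod_(i <- prime_residues) (1 - z ^+ i).
Proof.
have := congr1 (horner^~ 1) prod_XsubC_prime_residues.
rewrite horner_prod horner_sum; under eq_bigr do rewrite hornerXsubC.
under [in X in _ = X -> _]eq_bigr do rewrite -exprM hornerXn expr1n.
by rewrite sumr_const card_ord.
Qed.

Lemma one_sub_prim_root_assoc_field :
  p%:R = (1 - z) ^+ d * zeval z p_over_pi /\ (1 - z) ^+ d = p%:R * zeval z pi_over_p.
Proof.
have geom (x : F) n : 1 - x ^+ n = (1 - x) * \sum_(l < n) x ^+ l.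
  by rewrite -opprB subrX1 -mulNr opprB.
have -> : (1 - z) ^+ d = \prod_(i <- prime_residues) (1 - z).
  by rewrite big_const_seq count_predT iter_mulr mulr1 size_prime_residues.
rewrite prod_one_sub_prime_residues !rmorph_prod -!big_split /=.
split; apply: eq_big_seq => i iJ; rewrite rmorph_sum.
  by rewrite geom; congr (_ * _); apply: eq_bigr => l _; rewrite zevalXn.
rewrite (eq_bigr (fun l : 'I__ => (z ^+ i) ^+ l)) => [|l _]; last by rewrite zevalXn exprM.
rewrite -geom -exprM -(expnS i) prednK ?totient_prime_pow_gt0 //.
rewrite -(prim_expr_mod z_prim) Euler_exp_totient; last first.
  by move: iJ; rewrite mem_filter coprime_sym => /andP[].
by rewrite modn_small ?prime_pow_gt1 ?expr1.
Qed.

End Field.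

Lemma one_sub_prim_root_assoc (R : idomainType) (z : R) : e.-primitive_root z ->
  p%:R = (1 - z) ^+ d * zeval z p_over_pi /\ (1 - z) ^+ d = p%:R * zeval z pi_over_p.
Proof.
move=> z_prim; pose iota_R : {rmorphism R -> {fraction R}} := @tofrac R.
have iota_inj : injective iota_R by move=> a b /eqP; rewrite tofrac_eq => /eqP.
have iota_unity n : n.-unity_root (iota_R z) = n.-unity_root z.
  by rewrite !unity_rootE -rmorphXn -(rmorph1 iota_R) (inj_eq iota_inj).
have zF_prim : e.-primitive_root (iota_R z).
  by move: z_prim; congr (_ && _); apply: eq_forallb => i; rewrite iota_unity.
have [] := one_sub_prim_root_assoc_field zF_prim.
rewrite -!(rmorph_zeval iota_R) -(rmorph_nat iota_R) -(rmorph1 iota_R) -!rmorphB.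
by rewrite -!rmorphXn -!rmorphM => /iota_inj -> /iota_inj.
Qed.

Lemma one_sub_prim_root_neq0 (R : nzRingType) (x : R) : e.-primitive_root x -> 1 - x != 0.
Proof.
move=> x_prim; rewrite subr_eq0 eq_sym -[x]expr1 -(prim_order_dvd x_prim) dvdn1.
by rewrite neq_ltn prime_pow_gt1 orbT.
Qed.

Lemma prim_root_adic_split N P : exists j (Q : {poly int}),
  (j = N \/ (j < N)%N /\ ~~ (p%:Z %| Q.[1])%Z) /\
  forall (R : idomainType) (x : R), e.-primitive_root x ->
    zeval x P = (1 - x) ^+ j * zeval x Q.
Proof.
have p_eq (R : idomainType) (x : R) : e.-primitive_root x ->
    p%:R = (1 - x) * ((1 - x) ^+ d.-1 * zeval x p_over_pi).
  case/one_sub_prim_root_assoc => -> _.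
  by rewrite mulrA -exprS prednK ?totient_prime_pow_gt0.
(* If p | Q(1) then 1 - x divides Q(x), since Q(x) - Q(1) is a multiple of x - 1. *)
elim: N => [|N [j [Q [[-> | [ltjN ndvd]] PQ]]]].
- by exists 0%N, P; split=> [|R x _]; [left | rewrite mul1r].
- have [/dvdzP[t Q1] | ndvd] := boolP (p%:Z %| Q.[1])%Z; last first.
    by exists N, Q; split; [right|].
  have [T QT] := poly_split_at1 Q.
  exists N.+1, (t%:P * (1 - 'X) ^+ d.-1 * p_over_pi - T).
  split=> [|R x x_prim]; first by left.
  rewrite PQ // {1}QT Q1 exprSr -mulrA; congr (_ * _).
  rewrite rmorphD rmorphB !rmorphM !zevalC -pmulrn (p_eq _ _ x_prim).
  by rewrite rmorphXn !rmorphB zevalX rmorph1; ring.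
- by exists j, Q; split=> //; right; split=> //; apply: ltnW.
Qed.

Lemma one_sub_dvd_zeval_at1 (R : idomainType) (x y : R) Q T :
    e.-primitive_root x -> Q = Q.[1]%:P + T * ('X - 1) -> zeval x Q = (1 - x) * y ->
  (Q.[1] ^+ d)%:~R = p%:R * (zeval x pi_over_p * (y + zeval x T) ^+ d).
Proof.
move=> /one_sub_prim_root_assoc[_ pi_d] QT Qxy.
have Q1 : Q.[1]%:~R = (1 - x) * (y + zeval x T) :> R.
  rewrite -(zevalC x) -[_%:P](addrK (T * ('X - 1))) -QT rmorphB Qxy rmorphM.
  by rewrite rmorphB zevalX rmorph1; ring.
by rewrite rmorphXn /= Q1 exprMn pi_d mulrA.
Qed.

Lemma one_sub_dvd_zeval_pdvd_at1 (R : idomainType) (varpi x y : R) (Q : {poly int}) :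
    varpi \isn't a GRing.unit -> dvdr varpi p%:R -> e.-primitive_root x ->
  zeval x Q = (1 - x) * y -> (p%:Z %| Q.[1])%Z.
Proof.
move=> varpi_nunit [c p_varpi] x_prim Qxy; apply: contraT => ndvd.
have [T QT] := poly_split_at1 Q.
have Q1d := one_sub_dvd_zeval_at1 x_prim QT Qxy.
(* A Bezout relation u Q(1)^d + v p = 1 then makes p, hence varpi, a unit. *)
have cop : coprimez (Q.[1] ^+ d) p%:Z.
  by apply: coprimezXl; rewrite coprimezE coprime_sym prime_coprime -?dvdzE.
have [u [v]] := Bezoutz (Q.[1] ^+ d) p%:Z; rewrite (eqP cop).
move/(congr1 (fun n : int => n%:~R : R)); rewrite intrD !intrM Q1d -pmulrn mulr1z.
set a := zeval x _ * _ => uv.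
case/negP: varpi_nunit; apply/unitrPr; exists (c * (u%:~R * a + v%:~R)).
by rewrite mulrA (mulrC varpi) -p_varpi -[RHS]uv; ring.
Qed.

Lemma one_sub_dvd_zeval_pdvd_at1_Aint (w y : algC) (Q : {poly int}) :
    e.-primitive_root w -> y \in Aint -> zeval w Q = (1 - w) * y -> (p%:Z %| Q.[1])%Z.
Proof.
move=> w_prim yA Qwy; apply: contraT => ndvd.
have [T QT] := poly_split_at1 Q.
have Q1d := one_sub_dvd_zeval_at1 w_prim QT Qwy.
have wA := prim_root_Aint w_prim.
have p_neq0 : p%:R != 0 :> algC by rewrite pnatr_eq0 -lt0n prime_gt0.
have : ((Q.[1] ^+ d)%:~R / p%:R : algC) \is a Num.int.
  apply: Cint_rat_Aint; first by rewrite rpred_div ?rpred_int ?rpred_nat.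
  by rewrite Q1d mulrAC divff // mul1r rpredM ?rpredX ?rpredD ?zeval_Aint.
case/intrP => q Q1q.
have {Q1q}Q1q : Q.[1] ^+ d = q * p%:Z.
  by apply: (@intr_inj algC); rewrite intrM -pmulrn -Q1q mulfVK.
move: ndvd; rewrite dvdzE -[X in ~~ X]andbT -totient_prime_pow_gt0 -Euclid_dvdX //.
by rewrite -abszX Q1q abszM dvdn_mull.
Qed.

Section NonDivisibility.
Variables (P Q : {poly int}) (j r : nat).
Hypotheses (ltj : (j < d * r)%N) (ndvd : ~~ (p%:Z %| Q.[1])%Z).

Lemma pexpr_ndvd_zeval (R : idomainType) (varpi x c : R) :
    varpi \isn't a GRing.unit -> dvdr varpi p%:R -> e.-primitive_root x ->
  zeval x P = (1 - x) ^+ j * zeval x Q -> zeval x P != c * p%:R ^+ r.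
Proof.
move=> varpi_nunit varpi_p x_prim PQ; apply/eqP => Pc.
have : (1 - x) ^+ j * zeval x Q = (1 - x) ^+ (d * r) * (c * zeval x p_over_pi ^+ r).
  rewrite -PQ Pc (proj1 (one_sub_prim_root_assoc x_prim)) exprMn exprM.
  by rewrite mulrCA mulrA.
move/(expf_cancel_lt (one_sub_prim_root_neq0 x_prim) ltj) => Qx.
by move: ndvd; rewrite (one_sub_dvd_zeval_pdvd_at1 varpi_nunit varpi_p x_prim Qx).
Qed.

Lemma pexpr_ndvd_zeval_Aint (w : algC) m :
    e.-primitive_root w -> zeval w P = (1 - w) ^+ j * zeval w Q -> coprime m p ->
  m%:R * (zeval w P / p%:R ^+ r) \notin Aint.
Proof.
move=> w_prim PQ m_cop; apply/negP; set a := m%:R * _ => aA.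
have pr_neq0 : p%:R ^+ r != 0 :> algC by rewrite expf_neq0 // pnatr_eq0 -lt0n prime_gt0.
have : (1 - w) ^+ j * zeval w (m%:Z%:P * Q) =
    (1 - w) ^+ (d * r) * (a * zeval w p_over_pi ^+ r).
  rewrite rmorphM zevalC mulrCA -PQ exprM mulrCA -exprMn.
  by rewrite -(proj1 (one_sub_prim_root_assoc w_prim)) /a -mulrA mulfVK // -pmulrn.
move/(expf_cancel_lt (one_sub_prim_root_neq0 w_prim) ltj) => mQw.
have ndvd_mQ : ~~ (p%:Z %| (m%:Z%:P * Q).[1])%Z.
  rewrite hornerM hornerC dvdzE abszM Euclid_dvdM // negb_or -dvdzE ndvd andbT.
  by rewrite -prime_coprime // coprime_sym.
have mQ_Aint : (1 - w) ^+ (d * r - j.+1) * (a * zeval w p_over_pi ^+ r) \in Aint.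
  have wA := prim_root_Aint w_prim.
  by rewrite rpredM ?rpredX ?rpredB ?rpred1 // rpredM ?rpredX ?zeval_Aint.
by rewrite (one_sub_dvd_zeval_pdvd_at1_Aint w_prim mQ_Aint mQw) in ndvd_mQ.
Qed.

End NonDivisibility.

Lemma prim_root_dvd_transfer (O : idomainType) (varpi z : O) (w : algC) P r :
    varpi \isn't a GRing.unit -> dvdr varpi p%:R ->
    e.-primitive_root w -> e.-primitive_root z ->
  (exists c : O, zeval z P = c * p%:R ^+ r) <-> p_integral p (zeval w P / p%:R ^+ r).
Proof.
move=> varpi_nunit varpi_p w_prim z_prim.
have [j [Q [[jE | [ltj ndvd]] PQ]]] := prim_root_adic_split (d * r) P; last first.
  split=> [[c Pc] | [m [m_cop mP_Aint]]].
    have := pexpr_ndvd_zeval ltj ndvd c varpi_nunit varpi_p z_prim (PQ _ _ z_prim).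
    by rewrite Pc eqxx.
  have := pexpr_ndvd_zeval_Aint ltj ndvd w_prim (PQ _ _ w_prim) m_cop.
  by rewrite mP_Aint.
have PE (R : idomainType) (x : R) : e.-primitive_root x ->
    zeval x P = zeval x pi_over_p ^+ r * zeval x Q * p%:R ^+ r.
  move=> /[dup] x_prim /one_sub_prim_root_assoc[_ pi_d].
  by rewrite PQ // jE exprM pi_d exprMn; ring.
split=> _; last by exists (zeval z pi_over_p ^+ r * zeval z Q); apply: PE.
have pr_neq0 : p%:R ^+ r != 0 :> algC by rewrite expf_neq0 // pnatr_eq0 -lt0n prime_gt0.
exists 1%N; split; first exact: coprime1n.
by rewrite mul1r PE // mulfK // rpredM ?rpredX ?zeval_Aint ?(prim_root_Aint w_prim).
Qed.

End PrimePowerRootsOfUnity.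

Lemma p_integral_signr p b (x : algC) : p_integral p ((-1) ^+ b * x) <-> p_integral p x.
Proof.
by split=> [] [m [m_cop m_x]]; exists m; split=> //; move: m_x; rewrite mulrCA rpredMsign.
Qed.

Section SignedIsometries.
Variable gT : finGroupType.
Local Notation G := [set: gT]%G.

Lemma isometry_signed_irr (I : {ffun Iirr G -> 'CF(G)}) : is_isometry I ->
  exists (sgn : Iirr G -> bool) s, injective s /\ forall i, I i = (-1) ^+ sgn i *: 'chi_(s i).
Proof.
case=> I_Z I_orth.
have I_sgn i : exists bj : bool * Iirr G, I i = (-1) ^+ bj.1 *: 'chi_bj.2.
  have I_norm : '[I i] = 1 by rewrite I_orth eqxx.
  by have [b [j ->]] := vchar_norm1P (I_Z i) I_norm; exists (b, j).
have [bj bjP] := fin_all_exists I_sgn.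
exists (fun i => (bj i).1), (fun i => (bj i).2); split=> // i j eq_ij.
apply/eqP; apply: contraT => neq_ij.
have := I_orth i j; rewrite !bjP cfdotZl cfdotZr eq_ij cfnorm_irr (negPf neq_ij).
by rewrite rmorph_sign mulr1 => /eqP; rewrite mulf_eq0 !signr_eq0.
Qed.

Lemma iso_mu_signed (I : {ffun Iirr G -> 'CF(G)}) (b : bool) s (g h : gT) :
    (forall i, I i = (-1) ^+ b *: 'chi_(s i)) ->
  iso_mu I g h = (-1) ^+ b * \sum_i 'chi_(s i) g * 'chi_i (h^-1)%g.
Proof.
by move=> I_E; rewrite /iso_mu mulr_sumr; apply: eq_bigr => i _; rewrite I_E cfunE mulrA.
Qed.

End SignedIsometries.

Lemma sum_eq0_scaled (R : idomainType) (I : finType) (F : I -> R) (t : I -> I) (c : R) :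
  injective t -> c != 1 -> (forall i, F (t i) = c * F i) -> \sum_i F i = 0.
Proof.
move=> t_inj c_neq1 Ft.
have : (1 - c) * \sum_i F i = 0.
  apply/eqP; rewrite mulrBl mul1r subr_eq0 mulr_sumr {1}(reindex_inj t_inj) /=.
  by apply/eqP/eq_bigr => i _; rewrite Ft.
by move/eqP; rewrite mulf_eq0 subr_eq0 eq_sym (negPf c_neq1) => /eqP.
Qed.

Lemma is_alg_aut_comp (O : idomainType) (gT : finGroupType) (f1 f2 : galg O gT -> galg O gT) :
  is_alg_aut f1 -> is_alg_aut f2 -> is_alg_aut (f1 \o f2).
Proof.
case=> l1 m1 o1 b1 [l2 m2 o2 b2].
by split=> [c a b /=|a b /=|/=|]; rewrite ?l2 ?l1 ?m2 ?m1 ?o2 ?o1 //; apply: bij_comp.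
Qed.

Section AbelianCharacters.
Variables (gT : finGroupType) (O : idomainType) (w : algC) (z : O).
Local Notation G := [set: gT]%G.
Local Notation e := (exponent [set: gT]).
Hypotheses (abG : abelian G) (w_prim : e.-primitive_root w) (z_prim : e.-primitive_root z).
Hypothesis G_neq0 : #|G|%:R != 0 :> O.

Lemma lin_irr (i : Iirr G) : 'chi_i \is a linear_char.
Proof. by move/char_abelianP: abG. Qed.

Lemma Nirr_abelian : Nirr G = #|G|.
Proof. by rewrite NirrE; apply/eqP; rewrite -card_classes_abelian. Qed.

Lemma sum_irr_abelian g : \sum_i 'chi[G]_i g = (#|G| * (g == 1%g))%:R.
Proof.
rewrite natrM mulr_natr -cfRegE cfReg_sum sum_cfunE.
by apply: eq_bigr => i _; rewrite cfunE lin_char1 ?lin_irr ?mul1r.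
Qed.

(* ochi i is the O-valued character matching chi_i: chi_i g = w ^+ k becomes z ^+ k. *)
Definition irr_log (i : Iirr G) (g : gT) : nat :=
  odflt 0%N (omap val [pick k : 'I_e | 'chi_i g == w ^+ k]).

Definition ochi (i : Iirr G) (g : gT) : O := z ^+ irr_log i g.

Lemma irr_logE i g : 'chi_i g = w ^+ irr_log i g.
Proof.
rewrite /irr_log; case: pickP => [k /eqP -> // | none].
have : 'chi_i g ^+ e = 1.
  by rewrite -lin_charX ?lin_irr ?inE // expg_exponent ?inE // lin_char1 ?lin_irr.
by case/(prim_rootP w_prim) => k chi_k; have := none k; rewrite chi_k eqxx.
Qed.

Lemma eq_prim_roots_expr a b : (w ^+ a == w ^+ b) = (z ^+ a == z ^+ b).
Proof. by rewrite (eq_prim_root_expr w_prim) (eq_prim_root_expr z_prim). Qed.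

Lemma ochiM i g h : ochi i (g * h) = ochi i g * ochi i h.
Proof.
by apply/eqP; rewrite -exprD -eq_prim_roots_expr exprD -!irr_logE lin_charM ?lin_irr ?inE.
Qed.

Lemma ochi1 i : ochi i 1 = 1.
Proof.
by apply/eqP; rewrite -(expr0 z) -eq_prim_roots_expr expr0 -irr_logE lin_char1 ?lin_irr.
Qed.

Lemma ochiVg i g : ochi i g^-1 * ochi i g = 1.
Proof. by rewrite -ochiM mulVg ochi1. Qed.

Lemma ochi_neq0 i g : ochi i g != 0.
Proof.
by apply/eqP => ochi0; have := ochiVg i g; rewrite ochi0 mulr0 => /eqP; rewrite eq_sym oner_eq0.
Qed.

Lemma ochi_inj i j : ochi i =1 ochi j -> i = j.
Proof.
move=> eq_ij; apply/irr_inj/cfunP => g; apply/eqP.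
by rewrite !irr_logE eq_prim_roots_expr; apply/eqP/eq_ij.
Qed.

Lemma ochi_eq1 i g : (ochi i g == 1) = ('chi_i g == 1).
Proof. by rewrite irr_logE -(expr0 w) eq_prim_roots_expr. Qed.

Lemma ochi_mul_exists i j : exists l, forall g, ochi l g = ochi i g * ochi j g.
Proof.
have /irrP[l chi_l] := mul_lin_irr (lin_irr i) (mem_irr j).
exists l => g; apply/eqP; rewrite -exprD -eq_prim_roots_expr exprD -!irr_logE -chi_l.
by rewrite cfunE.
Qed.

Lemma sum_ochi g : \sum_i ochi i g = (#|G| * (g == 1%g))%:R.
Proof.
have [-> | g_neq1] := eqVneq g 1%g.
  by under eq_bigr do rewrite ochi1; rewrite sumr_const card_ord Nirr_abelian muln1.
have [i0 chi_i0] : exists i0 : Iirr G, 'chi_i0 g != 1.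
  apply/existsP; apply: contraT; rewrite negb_exists => /forallP chi1.
  have := sum_irr_abelian g; rewrite (negPf g_neq1) muln0.
  rewrite (eq_bigr (fun=> 1)) => [|i _]; last exact/eqP/negbNE.
  rewrite sumr_const card_ord Nirr_abelian mulr0n => /eqP.
  by rewrite pnatr_eq0 eqn0Ngt cardG_gt0.
have [t ochi_t] := fin_all_exists (ochi_mul_exists i0).
rewrite muln0; apply: (sum_eq0_scaled (t := t) (c := ochi i0 g)); last first.
- by move=> i; rewrite ochi_t.
- by rewrite ochi_eq1.
move=> i j eq_t; apply: ochi_inj => h.
by apply: (mulfI (ochi_neq0 i0 h)); rewrite -!ochi_t eq_t.
Qed.

Lemma sum_ochiV_ochi i j : \sum_g ochi i g^-1 * ochi j g = (#|G| * (i == j))%:R.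
Proof.
have [<- | neq_ij] := eqVneq i j.
  by under eq_bigr do rewrite ochiVg; rewrite sumr_const cardsT muln1.
have [g0 ochi_g0] : exists g0, ochi i g0 != ochi j g0.
  apply/existsP; apply: contraT; rewrite negb_exists => /forallP eq_ij.
  by rewrite (ochi_inj (fun g => eqP (negbNE (eq_ij g)))) eqxx in neq_ij.
rewrite muln0; apply: (sum_eq0_scaled (t := mulg g0) (c := ochi i g0^-1 * ochi j g0)).
- exact: mulgI.
- apply: contra ochi_g0 => /eqP ochi1_g0; apply/eqP.
  by rewrite -[LHS]mulr1 -ochi1_g0 mulrA [ochi i g0 * _]mulrC ochiVg mul1r.
by move=> g; rewrite invMg !ochiM; ring.
Qed.


Definition gdelta (g : gT) : {ffun gT -> O} := [ffun x => (x == g)%:R].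

Definition gev (i : Iirr G) (x : {ffun gT -> O}) : O := \sum_g x g * ochi i g.

Lemma gev_delta i g : gev i (gdelta g) = ochi i g.
Proof.
rewrite /gev (bigD1 g) //= big1 => [|h /negPf neq_hg]; last by rewrite ffunE neq_hg mul0r.
by rewrite ffunE eqxx mul1r addr0.
Qed.

Lemma gev_lin i c (a b : {ffun gT -> O}) :
  gev i [ffun x => c * a x + b x] = c * gev i a + gev i b.
Proof.
by rewrite /gev mulr_sumr -big_split /=; apply: eq_bigr => g _; rewrite ffunE; ring.
Qed.

Lemma gev_mul i a b : gev i (galg_mul a b) = gev i a * gev i b.
Proof.
rewrite /gev mulr_suml; under eq_bigr do rewrite ffunE mulr_suml.
rewrite exchange_big; apply: eq_bigr => y _.
rewrite mulr_sumr (reindex_inj (mulgI y)); apply: eq_bigr => u _.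
by rewrite mulKg ochiM; ring.
Qed.

Lemma gdelta1 : gdelta 1 = galg_one O gT.
Proof. by apply/ffunP => x; rewrite !ffunE. Qed.

Lemma gev_one i : gev i (galg_one O gT) = 1.
Proof. by rewrite -gdelta1 gev_delta ochi1. Qed.

Lemma gdeltaM g h : galg_mul (gdelta g) (gdelta h) = gdelta (g * h).
Proof.
apply/ffunP => x; rewrite !ffunE (bigD1 g) //= big1 => [|y /negPf neq_yg]; last first.
  by rewrite ffunE neq_yg mul0r.
by rewrite !ffunE eqxx mul1r addr0 (canF_eq (mulKVg g)).
Qed.

Lemma gev_inversion (x : {ffun gT -> O}) g :
  #|G|%:R * x g = \sum_i gev i x * ochi i g^-1.
Proof.
transitivity (\sum_h x h * \sum_i ochi i (h * g^-1)).
  rewrite (bigD1 g) //= mulgV sum_ochi eqxx muln1 [X in _ + X]big1 ?addr0 1?mulrC // => h neq_hg.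
  by rewrite sum_ochi -eq_mulgV1 (negPf neq_hg) muln0 mulr0.
rewrite /gev; under [RHS]eq_bigr do rewrite mulr_suml.
rewrite exchange_big; apply: eq_bigr => h _; rewrite mulr_sumr.
by apply: eq_bigr => i _; rewrite ochiM mulrA.
Qed.

Lemma gev_inj (x y : {ffun gT -> O}) : (forall i, gev i x = gev i y) -> x = y.
Proof.
move=> eq_xy; apply/ffunP => g; apply: (mulfI G_neq0).
by rewrite !gev_inversion; apply: eq_bigr => i _; rewrite eq_xy.
Qed.

Lemma hom_ochi (f : gT -> O) : f 1%g = 1 -> {morph f : g h / (g * h)%g >-> g * h} ->
  exists i, f =1 ochi i.
Proof.
move=> f1 fM.
have [/existsP[i /forallP f_i] | /existsPn f_ochi] := boolP [exists i, [forall g, f g == ochi i g]].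
  by exists i => g; apply/eqP.
have orth i : \sum_g f g * ochi i g^-1 = 0.
  have /forallPn[g0 f_g0] := f_ochi i.
  apply: (sum_eq0_scaled (t := mulg g0) (c := f g0 * ochi i g0^-1)).
  - exact: mulgI.
  - apply: contra f_g0 => /eqP f_g0; apply/eqP.
    by rewrite -[LHS]mulr1 -(ochiVg i g0) mulrA f_g0 mul1r.
  by move=> g; rewrite fM invMg ochiM; ring.
have : \sum_i \sum_g f g * ochi i g^-1 = #|G|%:R.
  rewrite exchange_big (bigD1 1%g) //= -mulr_sumr invg1 sum_ochi eqxx muln1 f1 mul1r.
  rewrite [X in _ + X]big1 ?addr0 // => g neq_g1.
  by rewrite -mulr_sumr sum_ochi invg_eq1 (negPf neq_g1) muln0 mulr0.
by rewrite big1 // => /esym/eqP; rewrite (negPf G_neq0).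
Qed.

Lemma lin_functional_expand (L : {ffun gT -> O} -> O) :
    (forall c (a b : {ffun gT -> O}), L [ffun x => c * a x + b x] = c * L a + L b) ->
  forall x, L x = \sum_g x g * L (gdelta g).
Proof.
move=> L_lin x.
have L0 : L [ffun=> 0] = 0.
  have := L_lin 1 [ffun=> 0] [ffun=> 0]; rewrite mul1r.
  have -> : [ffun u => 1 * [ffun=> 0] u + [ffun=> 0] u] = [ffun=> 0] :> {ffun gT -> O}.
    by apply/ffunP => u; rewrite !ffunE mul1r addr0.
  by move/(congr1 (fun t => t - L [ffun=> 0])); rewrite subrr addrK.
pose S s := [ffun u => \sum_(g <- s) x g * gdelta g u].
have LS s : L (S s) = \sum_(g <- s) x g * L (gdelta g).
  elim: s => [|g s IH].
    by rewrite big_nil -L0; congr L; apply/ffunP => u; rewrite !ffunE big_nil.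
  rewrite big_cons -IH -L_lin; congr L; apply/ffunP => u.
  by rewrite !ffunE big_cons [gdelta g u]ffunE.
rewrite -LS; congr L; apply/ffunP => u.
rewrite ffunE (bigD1 u) //= big1 => [|g /negPf neq_gu]; last by rewrite ffunE eq_sym neq_gu mulr0.
by rewrite ffunE eqxx mulr1 addr0.
Qed.

Section Automorphism.
Variable f : {ffun gT -> O} -> {ffun gT -> O}.

Definition aut_irr i := odflt i [pick j | [forall g, gev j (f (gdelta g)) == ochi i g]].

Hypothesis f_aut : is_alg_aut f.

Lemma gev_aut_expand i x : gev i (f x) = \sum_g x g * gev i (f (gdelta g)).
Proof.
apply: (lin_functional_expand (L := fun y => gev i (f y))) => c a b /=.
by case: f_aut => f_lin _ _ _; rewrite f_lin gev_lin.
Qed.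

Lemma gev_aut_exists : exists tau, forall i x, gev i (f x) = gev (tau i) x.
Proof.
have gev_hom i : exists j, forall g, gev i (f (gdelta g)) = ochi j g.
  case: f_aut => _ fM f1 _; apply: hom_ochi; first by rewrite gdelta1 f1 gev_one.
  by move=> g h; rewrite -gdeltaM fM gev_mul.
have [tau tauP] := fin_all_exists gev_hom.
by exists tau => i x; rewrite gev_aut_expand; apply: eq_bigr => g _; rewrite tauP.
Qed.

Lemma aut_irrP i x : gev (aut_irr i) (f x) = gev i x.
Proof.
case: f_aut => _ _ _ [f' _ f'K].
have [tau tauP] := gev_aut_exists.
have tau_inj : injective tau.
  move=> j1 j2 eq_tau; apply: ochi_inj => h.
  by rewrite -!gev_delta -(f'K (gdelta h)) !tauP eq_tau.
have [j ->] : exists j, i = tau j by exists (invF tau_inj i); rewrite f_invF.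
rewrite /aut_irr; case: pickP => [j' /forallP j'P | /(_ j)/negP[]]; last first.
  by apply/forallP => g; rewrite tauP gev_delta.
by rewrite gev_aut_expand; apply: eq_bigr => g _; rewrite (eqP (j'P g)).
Qed.

Lemma aut_irr_uniq i j : (forall x, gev j (f x) = gev i x) -> aut_irr i = j.
Proof.
case: f_aut => _ _ _ [f' _ f'K] gev_ji; apply: ochi_inj => h.
by rewrite -!gev_delta -(f'K (gdelta h)) aut_irrP gev_ji.
Qed.

Lemma aut_irr_inj : injective aut_irr.
Proof.
move=> i j eq_ij; apply: ochi_inj => g.
by rewrite -!gev_delta -aut_irrP eq_ij aut_irrP.
Qed.

End Automorphism.

Lemma aut_irr_comp f1 f2 i : is_alg_aut f1 -> is_alg_aut f2 ->
  aut_irr (f1 \o f2) i = aut_irr f1 (aut_irr f2 i).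
Proof.
move=> f1_aut f2_aut; apply: aut_irr_uniq => [|x]; first exact: is_alg_aut_comp.
by rewrite /= (aut_irrP f1_aut) (aut_irrP f2_aut).
Qed.

Section PermutationAutomorphism.
Variable s : Iirr G -> Iirr G.
Hypothesis s_inj : injective s.
Hypothesis s_dvd : forall g h, exists c : O, \sum_i ochi (s i) g * ochi i h = c * #|G|%:R.

Let perm_coef_ex u h : exists c : O, \sum_i ochi (s i) u^-1 * ochi i h == c * #|G|%:R.
Proof. by have [c ->] := s_dvd u^-1 h; exists c. Qed.

Let perm_coef u h : O := xchoose (perm_coef_ex u h).

Let perm_coefE u h : \sum_i ochi (s i) u^-1 * ochi i h = perm_coef u h * #|G|%:R.
Proof. exact/eqP/(xchooseP (perm_coef_ex u h)). Qed.

(* The inverse Fourier transform of the y with gev (s i) y = gev i x; s_dvd is exactly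
   what makes its coefficients lie in O. *)
Definition perm_galg (x : {ffun gT -> O}) : {ffun gT -> O} :=
  [ffun u => \sum_h x h * perm_coef u h].

Lemma gev_perm_galg j x : gev (s j) (perm_galg x) = gev j x.
Proof.
apply: (mulfI G_neq0); rewrite /gev mulr_sumr.
transitivity (\sum_h x h * \sum_u perm_coef u h * #|G|%:R * ochi (s j) u).
  under eq_bigr do rewrite ffunE mulr_suml mulr_sumr.
  rewrite exchange_big; apply: eq_bigr => h _.
  by rewrite mulr_sumr; apply: eq_bigr => u _; ring.
transitivity (\sum_h x h * \sum_i ochi i h * \sum_u ochi (s i) u^-1 * ochi (s j) u).
  apply: eq_bigr => h _; congr (_ * _).
  under eq_bigr do rewrite -perm_coefE mulr_suml.
  rewrite exchange_big; apply: eq_bigr => i _.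
  by rewrite mulr_sumr; apply: eq_bigr => u _; ring.
rewrite mulr_sumr; apply: eq_bigr => h _.
under eq_bigr do rewrite sum_ochiV_ochi (inj_eq s_inj).
rewrite (bigD1 j) //= big1 => [|i /negPf neq_ij]; last by rewrite neq_ij muln0 mulr0.
by rewrite eqxx muln1 addr0; ring.
Qed.

Lemma perm_galg_lin c (a b : {ffun gT -> O}) :
  perm_galg [ffun x => c * a x + b x] = [ffun x => c * perm_galg a x + perm_galg b x].
Proof.
apply/ffunP => u; rewrite !ffunE mulr_sumr -big_split /=.
by apply: eq_bigr => h _; rewrite ffunE; ring.
Qed.

Lemma gev_perm_galg_inj x y : (forall j, gev (s j) x = gev (s j) y) -> x = y.
Proof.
move=> eq_xy; apply: gev_inj => i.
by have [j ->] : exists j, i = s j by exists (invF s_inj i); rewrite f_invF.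
Qed.

Lemma perm_galg_mul a b : perm_galg (galg_mul a b) = galg_mul (perm_galg a) (perm_galg b).
Proof. by apply: gev_perm_galg_inj => j; rewrite !gev_mul !gev_perm_galg gev_mul. Qed.

Lemma perm_galg_one : perm_galg (galg_one O gT) = galg_one O gT.
Proof. by apply: gev_perm_galg_inj => j; rewrite gev_perm_galg !gev_one. Qed.

End PermutationAutomorphism.

Lemma perm_aut_exists s : injective s ->
    (forall g h, exists c : O, \sum_i ochi (s i) g * ochi i h = c * #|G|%:R) ->
  exists f, is_alg_aut f /\ forall j x, gev (s j) (f x) = gev j x.
Proof.
move=> s_inj s_dvd; pose s' := invF s_inj.
have s'_inj : injective s' := can_inj (f_invF s_inj).
have s'_dvd g h : exists c : O, \sum_i ochi (s' i) g * ochi i h = c * #|G|%:R.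
  have [c s_c] := s_dvd h g; exists c; rewrite -s_c (reindex_inj s_inj) /=.
  by apply: eq_bigr => i _; rewrite /s' invF_f mulrC.
exists (perm_galg s_dvd); split; last exact: gev_perm_galg.
split; [exact: perm_galg_lin | exact: perm_galg_mul | exact: perm_galg_one |].
exists (perm_galg s'_dvd) => x.
  apply: gev_inj => i; rewrite -{1}(invF_f s_inj i).
  by rewrite (gev_perm_galg s'_inj s'_dvd) (gev_perm_galg s_inj s_dvd).
apply: (gev_perm_galg_inj s_inj) => j; rewrite (gev_perm_galg s_inj s_dvd).
by rewrite -{1}(invF_f s_inj j) (gev_perm_galg s'_inj s'_dvd).
Qed.

Definition perf_of_aut (f : {ffun gT -> O} -> {ffun gT -> O}) (b : bool) :
  {ffun Iirr G -> 'CF(G)} := [ffun i => (-1) ^+ b *: 'chi_(aut_irr f i)].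

Lemma perf_of_aut_comp f1 f2 b1 b2 : is_alg_aut f1 -> is_alg_aut f2 ->
  perf_of_aut (f1 \o f2) (b1 (+) b2) = iso_comp (perf_of_aut f1 b1) (perf_of_aut f2 b2).
Proof.
move=> f1_aut f2_aut; apply/ffunP => i; rewrite !ffunE /iso_ext aut_irr_comp //.
rewrite (bigD1 (aut_irr f2 i)) //= big1 => [|j neq_j]; last first.
  by rewrite ffunE cfdotZl cfdot_irr eq_sym (negPf neq_j) mulr0 scale0r.
by rewrite !ffunE cfdotZl cfdot_irr eqxx mulr1 addr0 scalerA signr_addb mulrC.
Qed.

Lemma perf_of_aut_inj f1 f2 b1 b2 : is_alg_aut f1 -> is_alg_aut f2 ->
  perf_of_aut f1 b1 = perf_of_aut f2 b2 -> f1 =1 f2 /\ b1 = b2.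
Proof.
move=> f1_aut f2_aut /ffunP eq_f.
have eq_i i : (-1) ^+ b1 *: 'chi_(aut_irr f1 i) = (-1) ^+ b2 *: 'chi_(aut_irr f2 i).
  by have := eq_f i; rewrite !ffunE.
have eq_b : b1 = b2.
  have /(congr1 (fun phi : 'CF(G) => phi 1%g)) := eq_i 0.
  by rewrite !cfunE !lin_char1 ?lin_irr // !mulr1 => /signr_inj.
subst b2; split=> // x.
have eq_aut i : aut_irr f1 i = aut_irr f2 i.
  by apply/irr_inj/(scalerI (a := (-1) ^+ b1)); rewrite ?signr_eq0 ?eq_i.
apply: gev_inj => i.
have [j ->] : exists j, i = aut_irr f1 j.
  by exists (invF (aut_irr_inj f1_aut) i); rewrite f_invF.
by rewrite (aut_irrP f1_aut) eq_aut (aut_irrP f2_aut).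
Qed.

Lemma perf_of_aut_isometry f b : is_alg_aut f -> is_isometry (perf_of_aut f b).
Proof.
move=> f_aut; split=> [i | i j]; first by rewrite ffunE rpredZsign irr_vchar.
rewrite !ffunE cfdotZl cfdotZr rmorph_sign cfdot_irr (inj_eq (aut_irr_inj f_aut)) mulrA.
by rewrite -signr_addb addbb expr0 mul1r.
Qed.

Section PGroup.
Variables (p : nat) (varpi : O).
Hypotheses (p_pr : prime p) (pG : (p.-group G)%g).
Hypotheses (varpi_nunit : varpi \isn't a GRing.unit) (varpi_p : dvdr varpi p%:R).

Lemma p'elt_pgroup (g : gT) : (p^'.-elt g)%g = (g == 1%g).
Proof.
apply/idP/eqP => [p'g | ->]; last exact: p_elt1.
have pg : (p.-elt g)%g := mem_p_elt pG (in_setT g).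
by apply/eqP; rewrite -order_eq1; apply/eqP; exact: pnat_1 pg p'g.
Qed.

Lemma card_cent1_abelian (g : gT) : #|'C[g]%g| = #|G|.
Proof.
suff -> : 'C[g]%g = [set: gT] by [].
by apply/eqP; rewrite eqEsubset subsetT sub_cent1 (subsetP abG) ?inE.
Qed.

Lemma card_dvd_transfer P :
  (exists c : O, zeval z P = c * #|G|%:R) <-> p_integral p (zeval w P / #|G|%:R).
Proof.
have G_pow : #|G| = (p ^ logn p #|G|)%N := card_pgroup pG.
have /(dvdn_pfactor _ _ p_pr)[[|k] _ e_pow] : (e %| p ^ logn p #|G|)%N.
- by rewrite -G_pow exponent_dvdn.
- have /eqP G1 : G :==: 1%G by rewrite trivg_exponent e_pow.
  rewrite G1 cards1 !divr1; split=> _.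
    by exists 1%N; rewrite coprime1n mul1r zeval_Aint ?(prim_root_Aint w_prim).
  by exists (zeval z P); rewrite mulr1.
have w_prim' : (p ^ k.+1).-primitive_root w by rewrite -e_pow.
have z_prim' : (p ^ k.+1).-primitive_root z by rewrite -e_pow.
by rewrite G_pow !natrX; apply: prim_root_dvd_transfer varpi_nunit varpi_p w_prim' z_prim'.
Qed.

Lemma irr_sum_dvd_transfer (s : Iirr G -> Iirr G) g h :
  (exists c : O, \sum_i ochi (s i) g * ochi i h = c * #|G|%:R) <->
  p_integral p ((\sum_i 'chi_(s i) g * 'chi_i h) / #|G|%:R).
Proof.
pose P : {poly int} := \sum_i 'X^(irr_log (s i) g + irr_log i h).
have zP : zeval z P = \sum_i ochi (s i) g * ochi i h.
  by rewrite rmorph_sum; apply: eq_bigr => i _; rewrite zevalXn exprD.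
have wP : zeval w P = \sum_i 'chi_(s i) g * 'chi_i h.
  by rewrite rmorph_sum; apply: eq_bigr => i _; rewrite zevalXn exprD -!irr_logE.
by rewrite -zP -wP; apply: card_dvd_transfer.
Qed.

Lemma perf_of_aut_perfect f b : is_alg_aut f -> is_perfect p (perf_of_aut f b).
Proof.
move=> f_aut g h; rewrite !card_cent1_abelian.
have muE : iso_mu (perf_of_aut f b) g h =
    (-1) ^+ b * \sum_i 'chi_(aut_irr f i) g * 'chi_i (h^-1)%g.
  by apply: iso_mu_signed => i; rewrite ffunE.
have mu_int : p_integral p (iso_mu (perf_of_aut f b) g h / #|G|%:R).
  rewrite muE -mulrA p_integral_signr -irr_sum_dvd_transfer.
  (* by Fourier inversion, the sum is |G| times a coefficient of f (gdelta h^-1) *)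
  exists (f (gdelta (h^-1)%g) (g^-1)%g); rewrite mulrC gev_inversion invgK.
  rewrite [RHS](reindex_inj (aut_irr_inj f_aut)) /=; apply: eq_bigr => i _.
  by rewrite (aut_irrP f_aut) gev_delta mulrC.
split=> [|//]; rewrite muE !p'elt_pgroup => mu_neq0.
have [g1 | g_neq1] := eqVneq g 1%g; have [h1 | h_neq1] := eqVneq h 1%g => //; move: mu_neq0.
  rewrite g1; under eq_bigr do rewrite lin_char1 ?lin_irr // mul1r.
  by rewrite sum_irr_abelian invg_eq1 (negPf h_neq1) muln0 mulr0 eqxx.
rewrite h1; under eq_bigr do rewrite invg1 lin_char1 ?lin_irr // mulr1.
have -> : \sum_i 'chi[G]_(aut_irr f i) g = \sum_i 'chi[G]_i g.
  by rewrite [RHS](reindex_inj (aut_irr_inj f_aut)).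
by rewrite sum_irr_abelian (negPf g_neq1) muln0 mulr0 eqxx.
Qed.

Lemma perfect_sign_const (I : {ffun Iirr G -> 'CF(G)}) (sgn : Iirr G -> bool) s :
    (forall i, I i = (-1) ^+ sgn i *: 'chi_(s i)) -> is_perfect p I ->
  forall i, sgn i = sgn 0.
Proof.
move=> I_E I_perf.
pose psi := \sum_i (-1) ^+ sgn i *: 'chi[G]_i.
have psi_off1 x : x != 1%g -> psi x = 0.
  move=> x_neq1; have [I_p' _] := I_perf 1%g (x^-1)%g.
  have mu0 : iso_mu I 1%g (x^-1)%g = 0.
    apply: contraTeq isT => /I_p'; rewrite !p'elt_pgroup eqxx invg_eq1.
    by rewrite (negPf x_neq1).
  rewrite -mu0 /iso_mu invgK sum_cfunE; apply: eq_bigr => i _.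
  by rewrite I_E !cfunE lin_char1 ?lin_irr // mulr1.
have psi_dot j : '[psi, 'chi_j] = (-1) ^+ sgn j.
  rewrite cfdot_suml (bigD1 j) //= big1 => [|i neq_ij]; last first.
    by rewrite cfdotZl cfdot_irr (negPf neq_ij) mulr0.
  by rewrite cfdotZl cfnorm_irr mulr1 addr0.
(* psi vanishes off 1, so its inner product with 'chi_j does not depend on j *)
have psi_dot1 j : '[psi, 'chi_j] = #|G|%:R^-1 * psi 1%g.
  rewrite cfdotE (bigD1 1%g) ?group1 //= big1 => [|x /andP[_ x_neq1]]; last first.
    by rewrite psi_off1 // mul0r.
  by rewrite (lin_char1 (lin_irr j)) conjC1 mulr1 addr0.
by move=> i; apply: (@signr_inj algC); rewrite -!psi_dot !psi_dot1.
Qed.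

Lemma perf_of_aut_surj I : Perf p I -> exists f b, is_alg_aut f /\ perf_of_aut f b = I.
Proof.
case=> I_iso I_perf.
have [sgn [s [s_inj I_E]]] := isometry_signed_irr I_iso.
have sgn_const := perfect_sign_const I_E I_perf; set b := sgn 0 in sgn_const.
have I_Eb i : I i = (-1) ^+ b *: 'chi_(s i) by rewrite I_E sgn_const.
have s_dvd g h : exists c : O, \sum_i ochi (s i) g * ochi i h = c * #|G|%:R.
  apply/irr_sum_dvd_transfer; have [_ [+ _]] := I_perf g (h^-1)%g.
  by rewrite card_cent1_abelian (iso_mu_signed _ _ I_Eb) -mulrA p_integral_signr invgK.
have [f [f_aut f_s]] := perm_aut_exists s_inj s_dvd.
exists f, b; split=> //; apply/ffunP => i; rewrite ffunE I_Eb.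
by congr (_ *: 'chi_ _); apply: aut_irr_uniq.
Qed.

End PGroup.

End AbelianCharacters.

Local Close Scope ring_scope.

Theorem lemma3p2 (p : nat) (O : idomainType) (gT : finGroupType) :
  prime p -> pmodular_ring O p -> large_enough O gT ->
  (abelian [set: gT])%g -> (p.-group [set: gT])%g ->
  exists F : (galg O gT -> galg O gT) -> bool -> {ffun Iirr [set: gT]%G -> 'CF([set: gT]%G)},
    [/\ forall f s, is_alg_aut f -> Perf p (F f s),
        forall f1 f2 s1 s2, is_alg_aut f1 -> is_alg_aut f2 ->
          F (f1 \o f2) (s1 (+) s2) = iso_comp (F f1 s1) (F f2 s2),
        forall f1 f2 s1 s2, is_alg_aut f1 -> is_alg_aut f2 ->
          F f1 s1 = F f2 s2 -> f1 =1 f2 /\ s1 = s2 &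
        forall I, Perf p I -> exists f s, is_alg_aut f /\ F f s = I].
Proof.
move=> p_pr [O_char0 [varpi [[_ varpi_nunit] _ _ varpi_p _]]] [z z_prim] abG pG.
have [w w_prim] := C_prim_root_exists (exponent_gt0 [set: gT]).
have G_neq0 : (#|[set: gT]%G|%:R != 0 :> O)%R.
  by apply/eqP => /O_char0 G0; have := cardG_gt0 [set: gT]%G; rewrite G0.
have perfect := perf_of_aut_perfect abG w_prim z_prim G_neq0 p_pr pG varpi_nunit varpi_p.
exists (perf_of_aut w z); split.
- by move=> f b f_aut; split; [apply: perf_of_aut_isometry | apply: perfect].
- by move=> f1 f2 b1 b2; apply: perf_of_aut_comp.
- by move=> f1 f2 b1 b2; apply: perf_of_aut_inj.
- exact: (perf_of_aut_surj abG w_prim z_prim G_neq0 p_pr pG varpi_nunit varpi_p).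
Qed.
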